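(* Let $F\in\mathbb{R}^{n\times n}$, $L\in\mathbb{R}^{n\times m}$, and let $\Sigma\in\mathbb{R}^{m\times m}$ be symmetric positive definite with symmetric square root $\Sigma^{1/2}$. Let $\alpha>0$ and $\bar v>0$, and set $\bar\omega=\alpha+\bar v$. Suppose there exist a symmetric positive definite matrix $\mathcal{P}\in\mathbb{R}^{n\times n}$ and a scalar $b\in(0,1)$ such that $$\begin{bmatrix} b\mathcal{P} & F^T \mathcal{P} & 0 & 0 & 0 & 0\\ \mathcal{P} F & \mathcal{P} & \mathcal{P} & -\mathcal{P} L \Sigma^{1/2} & 0 & 0\\ 0 & \mathcal{P} & \tfrac{1-b}{\bar{\omega}}I & 0 & 0 & 0\\ 0 & -\Sigma^{1/2}L^T \mathcal{P} & 0 & \tfrac{1-b}{\bar{\omega}}I & 0 & 0\\ 0 & 0 & 0 & 0 & I & 0\\ 0 & 0 & 0 & 0 & 0 & I \end{bmatrix}\succeq 0 .$$ Then every trajectory of $$e_{k+1}=Fe_k-L\Sigma^{1/2}\zeta_k+v_k,\qquad e_1=0,\quad k\in\mathbb{N},$$ driven by arbitrary sequences $\zeta_k\in\mathbb{R}^m$, $v_k\in\mathbb{R}^n$ with $\|\zeta_k\|^2\le\alpha$ and $\|v_k\|^2\le\bar v$ for all $k$, satisfies $e_k^T\mathcal{P}e_k\le 1$ for all $k\in\mathbb{N}$. In other words, the set $\mathcal{R}$ of all such reachable $e_k$ is contained in the ellipsoid $\{e\in\mathbb{R}^n : e^T\mathcal{P}e\le 1\}$.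
   Context: Setting: an estimation-error system $e_{k+1}=(F-LC)e_k-L\eta_k-L\delta_k+v_k$ with residual $r_k=Ce_k+\eta_k+\delta_k$, where $\eta_k$ is sensor noise, $v_k$ process noise and $\delta_k$ an additive sensor attack. It is rewritten in terms of the normalized residual $\zeta_k:=\Sigma^{-1/2}(Ce_k+\eta_k+\delta_k)$ as $e_{k+1}=Fe_k-L\Sigma^{1/2}\zeta_k+v_k$. A chi-squared detector with threshold $\alpha$ raises an alarm when $\|\zeta_k\|^2>\alpha$. In the paper, $\bar v$ is chosen so that $\Pr[\|v_k\|^2\le\bar v]=1-\mathcal{A}$, with $\mathcal{A}$ the false alarm rate. The set $\mathcal{R}$ (called the $(1-\mathcal{A})$-probable hidden reachable set) is then the set of states reachable from $e_1=0$ when $\|\zeta_k\|^2\le\alpha$ and $\|v_k\|^2\le\bar v$. The matrix inequality $\succeq 0$ means positive semidefinite. *)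

From HB Require Import structures.
From mathcomp Require Import all_boot all_order all_algebra.
Set Implicit Arguments. Unset Strict Implicit. Unset Printing Implicit Defensive.
Import Order.TTheory GRing.Theory Num.Theory.
Local Open Scope ring_scope.

Definition qform (R : realFieldType) (k : nat) (M : 'M[R]_k) (x : 'cV[R]_k) : R :=
  (x^T *m M *m x) 0 0.

Definition sqnorm (R : realFieldType) (k : nat) (x : 'cV[R]_k) : R :=
  (x^T *m x) 0 0.

Definition sym_mx (R : realFieldType) (k : nat) (M : 'M[R]_k) : Prop :=
  M^T = M.

Definition psd (R : realFieldType) (k : nat) (M : 'M[R]_k) : Prop :=
  sym_mx M /\ forall x : 'cV[R]_k, 0 <= qform M x.

Definition pd (R : realFieldType) (k : nat) (M : 'M[R]_k) : Prop :=
  sym_mx M /\ forall x : 'cV[R]_k, x != 0 -> 0 < qform M x.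

(* The 6x6 block LMI matrix of the theorem; block sizes n,n,n,m,n,m
   (the last two identity blocks are decoupled). S stands for Sigma^{1/2},
   w for omega_bar = alpha + vbar. *)
Definition lmi_mx (R : realFieldType) (n m : nat) (F P : 'M[R]_n)
  (L : 'M[R]_(n, m)) (S : 'M[R]_m) (b w : R)
  : 'M[R]_(n + (n + (n + (m + (n + m))))) :=
  let c := (1 - b) / w in
  let r1 := row_mx (b *: P) (row_mx (F^T *m P) (row_mx (0 : 'M_(n, n))
       (row_mx (0 : 'M_(n, m)) (row_mx (0 : 'M_(n, n)) (0 : 'M_(n, m)))))) in
  let r2 := row_mx (P *m F) (row_mx P (row_mx P
       (row_mx (- (P *m L *m S)) (row_mx (0 : 'M_(n, n)) (0 : 'M_(n, m)))))) in
  let r3 := row_mx (0 : 'M_(n, n)) (row_mx P (row_mx (c%:M : 'M_n)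
       (row_mx (0 : 'M_(n, m)) (row_mx (0 : 'M_(n, n)) (0 : 'M_(n, m)))))) in
  let r4 := row_mx (0 : 'M_(m, n)) (row_mx (- (S *m L^T *m P)) (row_mx (0 : 'M_(m, n))
       (row_mx (c%:M : 'M_m) (row_mx (0 : 'M_(m, n)) (0 : 'M_(m, m)))))) in
  let r5 := row_mx (0 : 'M_(n, n)) (row_mx (0 : 'M_(n, n)) (row_mx (0 : 'M_(n, n))
       (row_mx (0 : 'M_(n, m)) (row_mx (1%:M : 'M_n) (0 : 'M_(n, m)))))) in
  let r6 := row_mx (0 : 'M_(m, n)) (row_mx (0 : 'M_(m, n)) (row_mx (0 : 'M_(m, n))
       (row_mx (0 : 'M_(m, m)) (row_mx (0 : 'M_(m, n)) (1%:M : 'M_m))))) in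
  col_mx r1 (col_mx r2 (col_mx r3 (col_mx r4 (col_mx r5 r6)))).

From HB Require Import structures.
From mathcomp Require Import all_boot all_order all_algebra.
From mathcomp Require Import lra.
Import Order.TTheory GRing.Theory Num.Theory.
Local Open Scope ring_scope.

(* Write V x = x^T P x and c = (1 - b) / (alpha + vbar). Evaluating the LMI on
   the vector (e_k, -e_(k+1), v_k, zeta_k, 0, 0), where
   e_(k+1) = F e_k - L S zeta_k + v_k, gives exactly
   b V(e_k) - V(e_(k+1)) + c (|v_k|^2 + |zeta_k|^2) >= 0.  With the noise bounds
   this is V(e_(k+1)) <= b V(e_k) + (1 - b), so the ellipsoid {V <= 1} is
   invariant, and it contains e_1 = 0. *)

Section LmiQuadraticForm.

Set Implicit Arguments.
Unset Strict Implicit.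

Variables (R : realFieldType) (n m : nat).
Variables (F P : 'M[R]_n) (L : 'M[R]_(n, m)) (S : 'M[R]_m) (b w : R).
Hypothesis symS : S^T = S.

Definition lmi_test_vector (x e' v : 'cV[R]_n) (z : 'cV[R]_m)
  : 'cV[R]_(n + (n + (n + (m + (n + m))))) :=
  col_mx x (col_mx (- e') (col_mx v (col_mx z (col_mx (0 : 'cV_n) (0 : 'cV_m))))).

Lemma qform_lmi_mx_test_vector (x e' v : 'cV[R]_n) (z : 'cV[R]_m) :
  e' = F *m x - L *m S *m z + v ->
  qform (lmi_mx F P L S b w) (lmi_test_vector x e' v z)
  = b * qform P x - qform P e' + (1 - b) / w * sqnorm v + (1 - b) / w * sqnorm z.
Proof.
move=> def_e'.
(* Expanding only one occurrence of e' in e'^T P e' on each side lets the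
   cross terms cancel without transposing any 1 x 1 product. *)
have expand_left : e'^T *m P *m e'
    = x^T *m F^T *m P *m e' + v^T *m P *m e' - z^T *m S *m L^T *m P *m e'.
  by rewrite {1}def_e' !linearD !linearN /= !trmx_mul symS !mulmxDl !mulNmx
             !mulmxA addrAC.
have expand_right : e'^T *m P *m e'
    = e'^T *m P *m F *m x + e'^T *m P *m v - e'^T *m P *m L *m S *m z.
  by rewrite {2}def_e' !mulmxDr !mulmxN !mulmxA addrAC.
(* a targeted [linearN]: rewriting with it over the expanded goal is very slow *)
have trmxN : (- e')^T = - e'^T by exact: linearN.
rewrite /qform /sqnorm /lmi_mx /lmi_test_vector -mulmxA.
rewrite !mul_col_mx !mul_row_col !tr_col_mx !mul_row_col trmxN.
rewrite !(mul0mx, mulmx0, addr0, add0r).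
rewrite !(mulmxDl, mulmxDr, mulmxN, mulNmx, opprK) !mulmxA.
rewrite !mul_mx_scalar -scalemxAr -!scalemxAl -!trace_mx11.
move/(congr1 mxtrace): expand_left; move/(congr1 mxtrace): expand_right.
rewrite !(mxtraceD, mxtraceZ, raddfN) /=.
lra.
Qed.

Lemma qform_lmi_step_le (x v : 'cV[R]_n) (z : 'cV[R]_m) :
  psd (lmi_mx F P L S b w) ->
  qform P (F *m x - L *m S *m z + v)
    <= b * qform P x + (1 - b) / w * (sqnorm z + sqnorm v).
Proof.
move=> [_ lmi_ge0].
have := lmi_ge0 (lmi_test_vector x (F *m x - L *m S *m z + v) v z).
rewrite qform_lmi_mx_test_vector //.
lra.
Qed.

Lemma lmi_ellipsoid_invariant (x v : 'cV[R]_n) (z : 'cV[R]_m) :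
  0 < w -> 0 <= b <= 1 -> psd (lmi_mx F P L S b w) ->
  qform P x <= 1 -> sqnorm z + sqnorm v <= w ->
  qform P (F *m x - L *m S *m z + v) <= 1.
Proof.
move=> w_gt0 /andP[b_ge0 b_le1] lmi_psd x_in_ellipsoid zv_le.
have := qform_lmi_step_le x v z lmi_psd.
set c := (1 - b) / w.
have c_ge0 : 0 <= c by apply: divr_ge0; lra.
have cw : c * w = 1 - b by rewrite mulfVK // gt_eqF.
have : b * qform P x <= b by rewrite -[leRHS]mulr1 ler_wpM2l.
have : c * (sqnorm z + sqnorm v) <= c * w by rewrite ler_wpM2l.
lra.
Qed.

End LmiQuadraticForm.

Theorem theorem1 (R : realFieldType) (n m : nat)
  (F : 'M[R]_n) (L : 'M[R]_(n, m)) (Sigma S : 'M[R]_m)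
  (alpha vbar : R) (P : 'M[R]_n) (b : R) :
  pd Sigma -> sym_mx S -> S *m S = Sigma ->
  0 < alpha -> 0 < vbar ->
  pd P -> 0 < b -> b < 1 ->
  psd (lmi_mx F P L S b (alpha + vbar)) ->
  forall (e : nat -> 'cV[R]_n) (zeta : nat -> 'cV[R]_m) (v : nat -> 'cV[R]_n),
    e 1%N = 0 ->
    (forall k : nat, (1 <= k)%N -> e k.+1 = F *m e k - L *m S *m zeta k + v k) ->
    (forall k : nat, (1 <= k)%N -> sqnorm (zeta k) <= alpha) ->
    (forall k : nat, (1 <= k)%N -> sqnorm (v k) <= vbar) ->
    forall k : nat, (1 <= k)%N -> qform P (e k) <= 1.
Proof.
move=> _ symS _ alpha_gt0 vbar_gt0 _ b_gt0 b_lt1 lmi_psd e zeta v e1 e_next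
  zeta_le v_le.
have w_gt0 : 0 < alpha + vbar by rewrite addr_gt0.
have b01 : 0 <= b <= 1 by rewrite ltW // ltW.
elim=> [//|[|k] IHk] _.
  by rewrite e1 /qform trmx0 !mul0mx mxE.
rewrite e_next //.
apply: (lmi_ellipsoid_invariant symS w_gt0 b01 lmi_psd (IHk isT)).
by rewrite lerD ?zeta_le ?v_le.
Qed.
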